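(* Let $F\in\mathbb{R}^{n\times n}$, $C\in\mathbb{R}^{m\times n}$, and let $\Sigma\in\mathbb{R}^{m\times m}$ be symmetric positive definite with symmetric square root $\Sigma^{1/2}$. Let $\alpha,\bar v>0$, $\bar\omega=\alpha+\bar v$, $b\in(0,1)$ and $\gamma>0$. Suppose $(\mathcal{P},M)$, with $\mathcal{P}\in\mathbb{R}^{n\times n}$ symmetric and $M\in\mathbb{R}^{n\times m}$, solves $$\min_{\mathcal{P},M}\ -\log\det\mathcal{P}$$ subject to $\mathcal{P}\succ0$, $$\begin{bmatrix} b\mathcal{P} & F^T \mathcal{P} & 0 & 0 & 0 & 0\\ \mathcal{P} F & \mathcal{P} & \mathcal{P} & -M \Sigma^{1/2} & 0 & 0\\ 0 & \mathcal{P} & \tfrac{1-b}{\bar{\omega}}I & 0 & 0 & 0\\ 0 & -\Sigma^{1/2}M^T & 0 & \tfrac{1-b}{\bar{\omega}}I & 0 & 0\\ 0 & 0 & 0 & 0 & I & 0\\ 0 & 0 & 0 & 0 & 0 & I \end{bmatrix}\succeq 0,$$ and $$\begin{bmatrix} \mathcal{P} & 0 & 0 & F^T\mathcal{P} - C^TM^T & C^T\\ 0 & \gamma^2I & 0 & -M^T & I\\ 0 & 0 & \gamma^2I & \mathcal{P} & 0\\ \mathcal{P}F-MC & -M & \mathcal{P} & \mathcal{P} & 0\\ C & I & 0 & 0 & I \end{bmatrix}\succeq 0.$$ Set $L=\mathcal{P}^{-1}M$. Then: (i) every trajectory of $e_{k+1}=Fe_k-L\Sigma^{1/2}\zeta_k+v_k$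 with $e_1=0$ and $\|\zeta_k\|^2\le\alpha$, $\|v_k\|^2\le\bar v$ for all $k$ satisfies $e_k^T\mathcal{P}e_k\le1$; (ii) the $H_\infty$ gain from $(\eta_k^T,v_k^T)^T$ to $r_k=Ce_k+\eta_k$ of the system $e_{k+1}=(F-LC)e_k-L\eta_k+v_k$ is at most $\gamma$; (iii) the ellipsoid $\{e:e^T\mathcal{P}e\le1\}$ has minimal volume among all ellipsoids $\{e:e^T\mathcal{P}'e\le 1\}$ arising from feasible pairs $(\mathcal{P}',M')$ of these constraints.
   Context: The system is the estimation-error dynamics of a Luenberger observer with gain $L$. The normalized residual is $\zeta_k=\Sigma^{-1/2}(Ce_k+\eta_k+\delta_k)$, where $\delta_k$ is a sensor attack. The threshold $\alpha$ is that of a chi-squared detector that alarms when $\|\zeta_k\|^2>\alpha$. The residual covariance $\Sigma$ is treated as a given fixed matrix. The volume of $\{e:e^T\mathcal{P}e\le1\}$ is proportional to $(\det\mathcal{P})^{-1/2}$. *)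

From HB Require Import structures.
From mathcomp Require Import all_boot all_order all_algebra.
Set Implicit Arguments. Unset Strict Implicit. Unset Printing Implicit Defensive.
Import Order.TTheory GRing.Theory Num.Theory.
Local Open Scope ring_scope.

Section Defs.
Variable R : rcfType.

Definition symmx (k : nat) (A : 'M[R]_k) : Prop := A^T = A.

Definition psd (k : nat) (A : 'M[R]_k) : Prop :=
  symmx A /\ forall x : 'cV[R]_k, 0 <= (x^T *m A *m x) 0 0.

Definition pd (k : nat) (A : 'M[R]_k) : Prop :=
  symmx A /\ forall x : 'cV[R]_k, x != 0 -> 0 < (x^T *m A *m x) 0 0.

Definition sqnorm (k : nat) (x : 'cV[R]_k) : R := (x^T *m x) 0 0.

Definition qform (k : nat) (P : 'M[R]_k) (e : 'cV[R]_k) : R := (e^T *m P *m e) 0 0.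

(* Volume of {e : e^T P e <= 1}, up to the dimension-dependent positive
   constant (volume of the unit ball): (det P)^(-1/2). *)
Definition ellipsoid_vol (k : nat) (P : 'M[R]_k) : R := (Num.sqrt (\det P))^-1.

Definition LMI1 (n m d5 d6 : nat) (F : 'M[R]_n) (Sh : 'M[R]_m)
    (alpha vbar b : R) (P : 'M[R]_n) (M : 'M[R]_(n, m))
    : 'M[R]_(n + (n + (n + (m + (d5 + d6))))) :=
  let c := (1 - b) / (alpha + vbar) in
  col_mx (row_mx (b *: P) (row_mx (F^T *m P) (row_mx 0 (row_mx 0 (row_mx 0 0)))))
 (col_mx (row_mx (P *m F) (row_mx P (row_mx P (row_mx (- (M *m Sh)) (row_mx 0 0)))))
 (col_mx (row_mx 0 (row_mx P (row_mx (c%:M) (row_mx 0 (row_mx 0 0)))))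
 (col_mx (row_mx 0 (row_mx (- (Sh *m M^T)) (row_mx 0 (row_mx (c%:M) (row_mx 0 0)))))
 (col_mx (row_mx 0 (row_mx 0 (row_mx 0 (row_mx 0 (row_mx 1%:M 0)))))
         (row_mx 0 (row_mx 0 (row_mx 0 (row_mx 0 (row_mx 0 1%:M))))))))).

Definition LMI2 (n m : nat) (F : 'M[R]_n) (C : 'M[R]_(m, n)) (gamma : R)
    (P : 'M[R]_n) (M : 'M[R]_(n, m)) : 'M[R]_(n + (m + (n + (n + m)))) :=
  col_mx (row_mx P (row_mx 0 (row_mx 0 (row_mx (F^T *m P - C^T *m M^T) C^T))))
 (col_mx (row_mx 0 (row_mx ((gamma ^+ 2)%:M) (row_mx 0 (row_mx (- M^T) 1%:M))))
 (col_mx (row_mx 0 (row_mx 0 (row_mx ((gamma ^+ 2)%:M) (row_mx P 0))))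
 (col_mx (row_mx (P *m F - M *m C) (row_mx (- M) (row_mx P (row_mx P 0))))
         (row_mx C (row_mx 1%:M (row_mx 0 (row_mx 0 1%:M))))))).

Definition feasible (n m d5 d6 : nat) (F : 'M[R]_n) (C : 'M[R]_(m, n))
    (Sh : 'M[R]_m) (alpha vbar b gamma : R) (P : 'M[R]_n) (M : 'M[R]_(n, m)) : Prop :=
  symmx P /\ pd P /\ psd (LMI1 d5 d6 F Sh alpha vbar b P M)
  /\ psd (LMI2 F C gamma P M).

(* H-infinity (= l2-induced) gain of the discrete-time LTI system
     e_{k+1} = A e_k + B w_k,  r_k = Cr e_k + D w_k,  e_1 = 0
   is at most gamma: for every input sequence and every horizon N,
     sum_{k=1}^N |r_k|^2 <= gamma^2 sum_{k=1}^N |w_k|^2. *)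
Definition hinf_gain_le (n p q : nat) (A : 'M[R]_n) (B : 'M[R]_(n, p))
    (Cr : 'M[R]_(q, n)) (D : 'M[R]_(q, p)) (gamma : R) : Prop :=
  forall (w : nat -> 'cV[R]_p) (e : nat -> 'cV[R]_n),
    e 1%N = 0 ->
    (forall k, (1 <= k)%N -> e k.+1 = A *m e k + B *m w k) ->
    forall N : nat,
      \sum_(1 <= k < N.+1) sqnorm (Cr *m e k + D *m w k)
        <= gamma ^+ 2 * \sum_(1 <= k < N.+1) sqnorm (w k).

End Defs.

(** The ellipsoid is invariant because, once the error recursion is substituted,
    the quadratic form of the first LMI at (e_k, -e_{k+1}, v_k, zeta_k, 0, 0)
    equals  b V(e_k) - V(e_{k+1}) + c (|v_k|^2 + |zeta_k|^2)  with
    V(e) = e^T P e  and  c (alpha + vbar) = 1 - b;  its nonnegativity gives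
    V(e_{k+1}) <= b V(e_k) + (1 - b) <= 1.  Likewise the quadratic form of the
    second LMI at (e_k, eta_k, v_k, -e_{k+1}, -r_k) is nonnegative exactly
    when  V(e_{k+1}) - V(e_k) + |r_k|^2 <= gamma^2 |w_k|^2,  and this
    dissipation inequality telescopes to the H-infinity bound.  Finally, the volume (det P)^(-1/2)
    decreases with det P, which the optimal P maximises. *)
From HB Require Import structures.
From mathcomp Require Import all_boot all_order all_algebra.
From mathcomp Require Import ring lra.
Set Implicit Arguments. Unset Strict Implicit. Unset Printing Implicit Defensive.
Import Order.TTheory GRing.Theory Num.Theory.
Local Open Scope ring_scope.

Section ScalarEntry.
Variables (R : pzRingType) (p q : nat).
Implicit Types A B : 'M[R]_(p.+1, q.+1).

Lemma mx00D A B : (A + B) 0 0 = A 0 0 + B 0 0. Proof. by rewrite mxE. Qed.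
Lemma mx00N A : (- A) 0 0 = - A 0 0. Proof. by rewrite mxE. Qed.
Lemma mx00Z a A : (a *: A) 0 0 = a * A 0 0. Proof. by rewrite mxE. Qed.

End ScalarEntry.

Section PositiveDefinite.
Variable R : rcfType.

Lemma sqnorm_ge0 {n} (x : 'cV[R]_n) : 0 <= sqnorm x.
Proof.
rewrite /sqnorm mxE; apply: sumr_ge0 => i _.
by rewrite mxE -expr2 sqr_ge0.
Qed.

Lemma sqnorm_col_mx p q (a : 'cV[R]_p) (c : 'cV[R]_q) :
  sqnorm (col_mx a c) = sqnorm a + sqnorm c.
Proof. by rewrite /sqnorm tr_col_mx mul_row_col mx00D. Qed.

Lemma pd_psd n (P : 'M[R]_n) : pd P -> psd P.
Proof.
case=> symP posP; split=> // x; have [->|/posP/ltW //] := eqVneq x 0.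
by rewrite mulmx0 mxE.
Qed.

Lemma pd_det_neq0 n (P : 'M[R]_n) : pd P -> \det P != 0.
Proof.
case=> _ posP; apply/negP => /det0P [v vn0 vP].
have := posP v^T; rewrite trmx_eq0 vn0 trmxK vP mul0mx mxE ltxx.
by move=> /(_ isT).
Qed.

(* The segment t P + (1 - t) I stays positive definite, so its determinant,
   a polynomial in t equal to 1 at t = 0, has no root in [0, 1]. *)
Lemma pd_det_gt0 n (P : 'M[R]_n) : pd P -> 0 < \det P.
Proof.
move=> pdP; have [symP posP] := pdP.
pose Q : 'M[{poly R}]_n :=
  \matrix_(i, j) ((P i j)%:P * 'X + ((1%:M : 'M[R]_n) i j)%:P * (1 - 'X)).
have detQE t : (\det Q).[t] = \det (t *: P + (1 - t) *: 1%:M).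
  rewrite -horner_evalE -det_map_mx; congr (\det _).
  apply/matrixP => i j; rewrite !mxE /= horner_evalE.
  by rewrite !hornerE /= mulrC [X in _ + X]mulrC.
have detQ0 : (\det Q).[0] = 1 by rewrite detQE scale0r add0r subr0 scale1r det1.
have detQ1 : (\det Q).[1] = \det P by rewrite detQE subrr scale0r addr0 scale1r.
rewrite ltNge; apply/negP => detP_le0.
have [t /andP [t_ge0 t_le1] rootQt] : exists2 t, 0 <= t <= 1 & root (- \det Q) t.
  apply: poly_ivt; first exact: ler01.
  by rewrite !hornerN detQ0 detQ1 oppr_le0 ler01 oppr_ge0 detP_le0.
have t_gt0 : 0 < t.
  rewrite lt_neqAle t_ge0 andbT eq_sym; apply: contraTneq rootQt => ->.
  by rewrite rootN; apply/rootP/eqP; rewrite detQ0 oner_neq0.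
have pd_segment : pd (t *: P + (1 - t) *: 1%:M).
  split.
    by rewrite /symmx raddfD /= !linearZ /= symP trmx1.
  move=> x xn0; rewrite mulmxDr mulmxDl -!scalemxAr -!scalemxAl mulmx1 !(mx00D, mx00Z).
  have := posP x xn0; have := sqnorm_ge0 x; rewrite /sqnorm; nra.
by move: rootQt; rewrite rootN => /rootP; rewrite detQE; apply/eqP/pd_det_neq0.
Qed.

End PositiveDefinite.

Lemma addrN_cancel3 (V : zmodType) (a c d : V) : a + (- (a - c + d) + (d - c)) = 0.
Proof. by rewrite opprD opprB [c - a - d + _]addrA subrK addrAC subrr add0r subrr. Qed.

Lemma addrN_cancel3' (V : zmodType) (a b c : V) : a + (- b + (c - (a - b + c))) = 0.
Proof. by rewrite !addrA subrr. Qed.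

Section ObserverLMIs.
Variables (R : rcfType) (n m : nat) (F : 'M[R]_n) (P : 'M[R]_n) (L : 'M[R]_(n, m)).

Lemma LMI1_qform d5 d6 (Sh : 'M[R]_m) (alpha vbar b : R) e z v e' :
  symmx P -> symmx Sh -> e' = F *m e - L *m Sh *m z + v ->
  let x := col_mx e (col_mx (- e') (col_mx v (col_mx z (col_mx (0 : 'cV_d5) (0 : 'cV_d6))))) in
  (x^T *m LMI1 d5 d6 F Sh alpha vbar b P (P *m L) *m x) 0 0 =
  b * qform P e - qform P e' + (1 - b) / (alpha + vbar) * (sqnorm v + sqnorm z).
Proof.
move=> symP symSh e'E x; rewrite /x /LMI1 /qform /sqnorm -mulmxA.
rewrite !mul_col_mx !mul_row_col !tr_col_mx !mul_row_col.
rewrite !trmx0 ?mul0mx ?mulmx0 ?addr0 ?add0r.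
(* The recursion for [e'] makes the second block row of the LMI vanish on [x]. *)
have -> : P *m F *m e + (P *m - e' + (P *m v + - (P *m L *m Sh) *m z)) = 0.
  rewrite mulmxN {1}e'E !mulmxDr !mulmxN !mulNmx !mulmxA.
  exact: addrN_cancel3.
have -> : e'^T *m P *m e' = (F *m e - L *m Sh *m z + v)^T *m P *m e' by rewrite {1}e'E.
rewrite mulmx0 ?addr0 ?add0r.
rewrite !mul_scalar_mx !trmx_mul !raddfD !raddfN /= !trmx_mul symP symSh.
rewrite ?mulmxDr ?mulmxDl ?mulmxN ?mulNmx ?opprK -?scalemxAl -?scalemxAr ?mulmxA.
rewrite ?mulmxN ?opprK ?mulmxA !(mx00D, mx00N, mx00Z); ring.
Qed.

Section Invariance.
Variables (d5 d6 : nat) (Sh : 'M[R]_m) (alpha vbar b : R).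
Hypotheses (symP : symmx P) (symSh : symmx Sh) (alpha_vbar_gt0 : 0 < alpha + vbar).
Hypotheses (b_ge0 : 0 <= b) (b_le1 : b <= 1).
Hypothesis LMI1_psd : psd (LMI1 d5 d6 F Sh alpha vbar b P (P *m L)).

Lemma LMI1_step e z v :
  qform P e <= 1 -> sqnorm z <= alpha -> sqnorm v <= vbar ->
  qform P (F *m e - L *m Sh *m z + v) <= 1.
Proof.
move=> Ve_le1 z_le v_le.
have := LMI1_psd.2 (col_mx e (col_mx (- (F *m e - L *m Sh *m z + v))
  (col_mx v (col_mx z (col_mx (0 : 'cV_d5) (0 : 'cV_d6)))))).
rewrite LMI1_qform //.
set c := (1 - b) / (alpha + vbar).
have cE : c * (alpha + vbar) = 1 - b by rewrite /c mulfVK ?gt_eqF.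
have noise_le : c * (sqnorm v + sqnorm z) <= 1 - b.
  rewrite -cE; apply: ler_wpM2l; last by rewrite addrC; exact: lerD.
  by apply: divr_ge0; [rewrite subr_ge0 | exact: ltW].
have := ler_wpM2l b_ge0 Ve_le1; lra.
Qed.

Lemma LMI1_ellipsoid_invariant (zeta : nat -> 'cV[R]_m) (v e : nat -> 'cV[R]_n) :
  (forall k, (1 <= k)%N -> sqnorm (zeta k) <= alpha) ->
  (forall k, (1 <= k)%N -> sqnorm (v k) <= vbar) ->
  e 1%N = 0 ->
  (forall k, (1 <= k)%N -> e k.+1 = F *m e k - L *m Sh *m zeta k + v k) ->
  forall k, (1 <= k)%N -> qform P (e k) <= 1.
Proof.
move=> zeta_le v_le e1 eS; case=> // k _; elim: k => [|k IHk].
  by rewrite e1 /qform mulmx0 mxE ler01.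
by rewrite eS // LMI1_step ?zeta_le ?v_le.
Qed.

End Invariance.

Lemma LMI2_qform (C : 'M[R]_(m, n)) (gamma : R) e eta v e' r :
  symmx P -> e' = (F - L *m C) *m e - L *m eta + v -> r = C *m e + eta ->
  let x := col_mx e (col_mx eta (col_mx v (col_mx (- e') (- r)))) in
  (x^T *m LMI2 F C gamma P (P *m L) *m x) 0 0 =
  qform P e + gamma ^+ 2 * (sqnorm eta + sqnorm v) - qform P e' - sqnorm r.
Proof.
move=> symP e'E rE x; rewrite /x /LMI2 /qform /sqnorm -mulmxA.
rewrite !mul_col_mx !mul_row_col !tr_col_mx !mul_row_col.
rewrite ?trmx0 ?mul0mx ?mulmx0 ?addr0 ?add0r.
have -> : C *m e + (1%:M *m eta + 1%:M *m - r) = 0.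
  by rewrite !mul_scalar_mx !scale1r rE addrA subrr.
have -> : (P *m F - P *m L *m C) *m e + (- (P *m L) *m eta + (P *m v + P *m - e')) = 0.
  rewrite mulmxN {1}e'E !mulmxDr !mulmxN mulNmx !mulmxA mulmxBr !mulmxA mulmxBl.
  exact: addrN_cancel3'.
have -> : e'^T *m P *m e' = ((F - L *m C) *m e - L *m eta + v)^T *m P *m e'.
  by rewrite {1}e'E.
have -> : r^T *m r = (C *m e + eta)^T *m r by rewrite {1}rE.
rewrite !mulmx0 ?addr0 !mul_scalar_mx ?scale1r.
rewrite ?raddfD ?raddfB ?raddfN /= ?trmx_mul ?symP ?linearB /= ?trmx_mul.
rewrite ?mulmxDr ?mulmxDl ?mulmxBr ?mulmxBl ?mulmxN ?mulNmx ?opprK -?scalemxAl -?scalemxAr ?mulmxA.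
rewrite ?mulmxBr ?mulmxBl ?mulmxN ?opprK ?mulmxA !(mx00D, mx00N, mx00Z); ring.
Qed.

Section Dissipation.
Variables (C : 'M[R]_(m, n)) (gamma : R).
Hypotheses (psdP : psd P) (LMI2_psd : psd (LMI2 F C gamma P (P *m L))).

Lemma LMI2_dissipation e (w : 'cV[R]_(m + n)) :
  qform P ((F - L *m C) *m e + row_mx (- L) 1%:M *m w)
    + sqnorm (C *m e + row_mx 1%:M 0 *m w)
  <= qform P e + gamma ^+ 2 * sqnorm w.
Proof.
rewrite -[w]vsubmxK sqnorm_col_mx !mul_row_col mul0mx addr0 mulNmx.
rewrite !mul_scalar_mx !scale1r addrA.
have := LMI2_psd.2 (col_mx e (col_mx (usubmx w) (col_mx (dsubmx w)
  (col_mx (- ((F - L *m C) *m e - L *m usubmx w + dsubmx w))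
          (- (C *m e + usubmx w)))))).
rewrite LMI2_qform //; [lra | exact: psdP.1].
Qed.

Lemma LMI2_hinf_gain :
  hinf_gain_le (F - L *m C) (row_mx (- L) 1%:M) C (row_mx 1%:M 0) gamma.
Proof.
move=> w e e1 eS N.
suff energy_le : \sum_(1 <= k < N.+1) sqnorm (C *m e k + row_mx 1%:M 0 *m w k)
    + qform P (e N.+1) <= gamma ^+ 2 * \sum_(1 <= k < N.+1) sqnorm (w k).
  by have := psdP.2 (e N.+1); rewrite -/(qform P _); lra.
elim: N => [|N IHN].
  by rewrite !big_geq // e1 /qform mulmx0 mxE add0r mulr0.
rewrite big_nat_recr //= [X in _ <= _ * X]big_nat_recr //= (eS N.+1) //.
have := LMI2_dissipation (e N.+1) (w N.+1); lra.
Qed.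

End Dissipation.

End ObserverLMIs.

Lemma ellipsoid_vol_le (R : rcfType) n (P P' : 'M[R]_n) :
  0 < \det P' -> \det P' <= \det P -> ellipsoid_vol P <= ellipsoid_vol P'.
Proof.
move=> detP'_gt0 detP'_le; have detP_gt0 := lt_le_trans detP'_gt0 detP'_le.
by rewrite /ellipsoid_vol lef_pV2 ?posrE ?sqrtr_gt0 // ler_sqrt // ltW.
Qed.

Theorem corollary2 (R : rcfType) (n m d5 d6 : nat)
    (F : 'M[R]_n) (C : 'M[R]_(m, n)) (Sigma Sh : 'M[R]_m)
    (alpha vbar b gamma : R)
    (P : 'M[R]_n) (M : 'M[R]_(n, m)) :
  pd Sigma -> symmx Sh -> Sh *m Sh = Sigma ->
  0 < alpha -> 0 < vbar -> 0 < b -> b < 1 -> 0 < gamma ->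
  (* (P, M) solves  min -log det P  over the feasible set *)
  feasible d5 d6 F C Sh alpha vbar b gamma P M ->
  (forall (P' : 'M[R]_n) (M' : 'M[R]_(n, m)),
      feasible d5 d6 F C Sh alpha vbar b gamma P' M' -> \det P' <= \det P) ->
  let L := invmx P *m M in
  (* (i) invariance of the ellipsoid *)
  (forall (zeta : nat -> 'cV[R]_m) (v e : nat -> 'cV[R]_n),
      (forall k, (1 <= k)%N -> sqnorm (zeta k) <= alpha) ->
      (forall k, (1 <= k)%N -> sqnorm (v k) <= vbar) ->
      e 1%N = 0 ->
      (forall k, (1 <= k)%N -> e k.+1 = F *m e k - L *m Sh *m zeta k + v k) ->
      forall k, (1 <= k)%N -> qform P (e k) <= 1)
  /\
  (* (ii) H-infinity gain from w = (eta; v) to r = C e + eta is at most gamma *)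
  hinf_gain_le (F - L *m C) (row_mx (- L) 1%:M) C (row_mx 1%:M 0) gamma
  /\
  (* (iii) minimal volume among ellipsoids from feasible pairs *)
  (forall (P' : 'M[R]_n) (M' : 'M[R]_(n, m)),
      feasible d5 d6 F C Sh alpha vbar b gamma P' M' ->
      ellipsoid_vol P <= ellipsoid_vol P').
Proof.
move=> _ symSh _ alpha_gt0 vbar_gt0 b_gt0 b_lt1 _ [symP [pdP [LMI1_psd LMI2_psd]]] optP L.
have P_unit : P \in unitmx by rewrite unitmxE unitfE pd_det_neq0.
have ME : M = P *m L by rewrite /L mulmxA mulmxV // mul1mx.
rewrite ME in LMI1_psd LMI2_psd.
split; last split.
- apply: (LMI1_ellipsoid_invariant symP symSh _ _ _ LMI1_psd) => //.
  + exact: addr_gt0.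
  + exact: ltW.
  + exact: ltW.
- exact: LMI2_hinf_gain (pd_psd pdP) LMI2_psd.
- move=> P' M' feasP'; apply: ellipsoid_vol_le (optP _ _ feasP').
  by case: feasP' => _ [/pd_det_gt0 + _].
Qed.
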